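(* A set system $H=(U,(A_1,\dots,A_m))$ is harmonic if and only if its complement $\overline H=(U,(U\setminus A_1,\dots,U\setminus A_m))$ is harmonic.
   Context: For $I\subseteq[m]$, $H_I=\bigcap_{i\in I}A_i$ ($=U$ if $I=\emptyset$). The run decomposition of a finite set $I$ of positive integers is the partition formed by the sizes, in nonincreasing order, of the maximal runs of consecutive integers in $I$. $H$ is harmonic if $|H_I|=|H_J|$ whenever $I,J\subseteq[m]$ have the same run decomposition. *)

From mathcomp Require Import all_boot.
Set Implicit Arguments. Unset Strict Implicit. Unset Printing Implicit Defensive.

(* A set system H = (U, (A_1,...,A_m)): U is a finite type (the universe),
   A : 'I_m -> {set U}; index i : 'I_m stands for the integer i+1 of [m]. *)

Definition HI (U : finType) (m : nat) (A : 'I_m -> {set U}) (I : {set 'I_m})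
  : {set U} := \bigcap_(i in I) A i.

Definition natin (m : nat) (I : {set 'I_m}) (n : nat) : bool :=
  [exists i in I, val i == n].

(* a starts a maximal run of I: a in I and a-1 not in I (a = 0 is integer 1). *)
Definition run_start (m : nat) (I : {set 'I_m}) (a : 'I_m) : bool :=
  (a \in I) && ((val a == 0) || ~~ natin I (val a).-1).

Definition run_length (m : nat) (I : {set 'I_m}) (a : 'I_m) : nat :=
  #|[set j : 'I_m | (a <= j) &&
       [forall k : 'I_m, ((a <= k) && (k <= j)) ==> (k \in I)]]|.

Definition run_decomposition (m : nat) (I : {set 'I_m}) : seq nat :=
  sort geq [seq run_length I a | a <- enum [set a | run_start I a]].

Definition harmonic (U : finType) (m : nat) (A : 'I_m -> {set U}) : Prop :=
  forall I J : {set 'I_m},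
    run_decomposition I = run_decomposition J -> #|HI A I| = #|HI A J|.

Definition complement_system (U : finType) (m : nat) (A : 'I_m -> {set U})
  : 'I_m -> {set U} := fun i => ~: A i.

(* By inclusion-exclusion, |H'_I| = sum_(J <= I) (-1)^|J| |H_J| for the complement
   system H'.  If I and I' have the same run decomposition, pairing off runs of
   equal length and translating each onto its partner gives a bijection
   s : I -> I' that preserves and reflects adjacency (y = x + 1).  It maps every
   J <= I to s(J) <= I' of the same size and the same run decomposition, so for
   harmonic H the two alternating sums agree term by term.  The converse follows
   because complementation is an involution. *)

From mathcomp Require Import all_boot all_algebra zify.

Set Implicit Arguments. Unset Strict Implicit. Unset Printing Implicit Defensive.

Import GRing.Theory.

Section InclusionExclusion.
Local Open Scope ring_scope.

Lemma prod_1B_subsets (R : comPzRingType) (T : finType) (I : {set T}) (x : T -> R) :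
  \prod_(i in I) (1 - x i) =
  \sum_(J : {set T} | J \subset I) (-1) ^+ #|J| * \prod_(j in J) x j.
Proof.
transitivity (\prod_i ((if i \in I then - x i else 0) + 1)).
  by rewrite big_mkcond; apply: eq_bigr => i _; case: ifP; rewrite ?add0r // addrC.
rewrite bigA_distr (bigID (fun J : {set T} => J \subset I)) /=.
rewrite [X in _ + X]big1 ?addr0 => [|J /subsetPn[i iJ iNI]]; last first.
  by rewrite (bigD1 i) //= iJ (negbTE iNI) mul0r.
apply: eq_bigr => J /subsetP JI; rewrite -prodrN [RHS]big_mkcond.
by apply: eq_bigr => i _; case: ifP => // /JI ->.
Qed.

Lemma natr_in_bigcap (R : pzSemiRingType) (T U : finType) (B : T -> {set U})
    (J : {set T}) (u : U) :
  (u \in \bigcap_(i in J) B i)%:R = \prod_(i in J) (u \in B i)%:R :> R.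
Proof.
apply: (big_morph (fun S : {set U} => (u \in S)%:R : R)) => [S S'|].
  by rewrite inE -mulnb natrM.
by rewrite inE.
Qed.

Lemma natr_card_sum (R : pzSemiRingType) (U : finType) (S : {set U}) :
  #|S|%:R = \sum_u (u \in S)%:R :> R.
Proof.
rewrite -sum1_card natr_sum big_mkcond /=.
by apply: eq_bigr => u _; case: (u \in S).
Qed.

Lemma card_bigcap_setC (R : comPzRingType) (T U : finType) (A : T -> {set U})
    (I : {set T}) :
  #|\bigcap_(i in I) ~: A i|%:R =
  \sum_(J : {set T} | J \subset I) (-1) ^+ #|J| * #|\bigcap_(j in J) A j|%:R :> R.
Proof.
under [RHS]eq_bigr => J _ do rewrite natr_card_sum mulr_sumr.
rewrite natr_card_sum exchange_big /=; apply: eq_bigr => u _.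
rewrite natr_in_bigcap.
have natr_inC i : (u \in ~: A i)%:R = 1 - (u \in A i)%:R :> R.
  by rewrite inE; case: (u \in A i); rewrite ?subr0 ?subrr.
under eq_bigr => i _ do rewrite natr_inC.
by rewrite prod_1B_subsets; apply: eq_bigr => J _; rewrite natr_in_bigcap.
Qed.

End InclusionExclusion.

Lemma perm_enum_imset (T T' : finType) (f : T -> T') (S : {set T}) :
  {in S &, injective f} -> perm_eq (enum (f @: S)) (map f (enum S)).
Proof.
move=> f_inj; apply: uniq_perm; first exact: enum_uniq.
  by rewrite map_inj_in_uniq ?enum_uniq // => x y; rewrite !mem_enum; apply: f_inj.
move=> y; rewrite mem_enum; apply/imsetP/mapP => -[x xS ->];
  by exists x; rewrite ?mem_enum in xS *.
Qed.

Lemma perm_enum_setU1 (T : finType) (a : T) (S : {set T}) :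
  a \notin S -> perm_eq (enum (a |: S)) (a :: enum S).
Proof.
move=> aNS; apply: uniq_perm; first exact: enum_uniq.
  by rewrite /= mem_enum aNS enum_uniq.
by move=> y; rewrite mem_enum in_setU1 in_cons mem_enum.
Qed.

Lemma big_subset_imset (R : Type) (idx : R) (op : Monoid.com_law idx)
    (T T' : finType) (f : T -> T') (I : {set T}) (F : {set T'} -> R) :
  {in I &, injective f} ->
  \big[op/idx]_(J' : {set T'} | J' \subset f @: I) F J' =
  \big[op/idx]_(J : {set T} | J \subset I) F (f @: J).
Proof.
move=> f_inj.
have sub_imset (J1 J2 : {set T}) :
    J1 \subset I -> J2 \subset I -> f @: J1 \subset f @: J2 -> J1 \subset J2.
  move=> /subsetP J1I /subsetP J2I /subsetP J12; apply/subsetP => x xJ1.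
  have /imsetP[y yJ2 fxy] := J12 _ (imset_f f xJ1).
  by rewrite (f_inj x y (J1I x xJ1) (J2I y yJ2) fxy).
have imset_inj : {in powerset I &, injective (fun J : {set T} => f @: J)}.
  move=> J1 J2; rewrite !powersetE => J1I J2I J12.
  apply/eqP; rewrite eqEsubset; apply/andP.
  by split; apply: sub_imset; rewrite // J12 subxx.
transitivity (\big[op/idx]_(J' in (fun J : {set T} => f @: J) @: powerset I) F J').
  apply: eq_bigl => J'; apply/idP/imsetP => [/subsetP J'I | [J]]; last first.
    by rewrite powersetE => JI ->; apply: imsetS.
  exists (I :&: f @^-1: J'); first by rewrite powersetE subsetIl.
  apply/setP => y; apply/idP/imsetP => [yJ' | [x] /setIP[_] /[!inE] xJ' -> //].
  by have /imsetP[x xI y_eq] := J'I y yJ'; exists x; rewrite // !inE xI -y_eq.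
by rewrite big_imset //; apply: eq_bigl => J; rewrite powersetE.
Qed.

Section Runs.
Variable m : nat.
Implicit Types (I J R X Y : {set 'I_m}) (s t : 'I_m -> 'I_m) (a b c i j x y : 'I_m).

Definition is_succ x y : bool := y == x.+1 :> nat.

Definition run X a : {set 'I_m} :=
  [set j : 'I_m | (a <= j) && [forall k : 'I_m, (a <= k <= j) ==> (k \in X)]].

Lemma run_lengthE X a : run_length X a = #|run X a|.
Proof. by []. Qed.

Lemma run_startE X a :
  run_start X a = (a \in X) && ~~ [exists b in X, is_succ b a].
Proof.
rewrite /run_start /natin; congr (_ && _); case: a => [[|n] lt_nm] /=.
  by apply/esym/exists_inP => -[b _ /eqP].
by congr negb; apply: eq_existsb => b; rewrite /is_succ /= eqSS eq_sym.
Qed.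

Lemma run_start_in X a : run_start X a -> a \in X.
Proof. by case/andP. Qed.

Lemma exists_pred j : 0 < j -> exists i, is_succ i j.
Proof.
move=> j_gt0; have lt_jm : j.-1 < m by have := ltn_ord j; lia.
by exists (Ordinal lt_jm); rewrite /is_succ /= prednK.
Qed.

Lemma run_sub X a : run X a \subset X.
Proof.
apply/subsetP => j; rewrite inE => /andP[a_le_j /forallP run_j].
by apply: (implyP (run_j j)); rewrite a_le_j leqnn.
Qed.

Lemma run_self X a : a \in X -> a \in run X a.
Proof.
move=> aX; rewrite inE leqnn; apply/forallP => k; apply/implyP => k_eq_a.
by have -> : k = a by apply: val_inj => /=; lia.
Qed.

Lemma run_ge X a j : j \in run X a -> a <= j.
Proof. by rewrite inE => /andP[]. Qed.

Lemma runS X Y a : X \subset Y -> run X a \subset run Y a.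
Proof.
move=> /subsetP XY; apply/subsetP => j; rewrite !inE => /andP[-> /forallP run_j].
by apply/forallP => k; apply/implyP => /(implyP (run_j k)) /XY.
Qed.

Lemma run_succ X a i j : i \in run X a -> is_succ i j -> j \in X -> j \in run X a.
Proof.
rewrite !inE => /andP[a_le_i /forallP run_i] /eqP ij jX.
apply/andP; split; first lia.
apply/forallP => k; apply/implyP => /andP[a_le_k k_le_j].
have [k_le_i | i_lt_k] := leqP k i.
  by apply: (implyP (run_i k)); rewrite a_le_k k_le_i.
by have -> : k = j by apply: val_inj => /=; lia.
Qed.

Lemma run_pred X a i j : j \in run X a -> j != a -> is_succ i j -> i \in run X a.
Proof.
rewrite !inE -val_eqE /= => /andP[a_le_j /forallP run_j] j_ne_a /eqP ij.
apply/andP; split; first lia.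
apply/forallP => k; apply/implyP => /andP[a_le_k k_le_i].
by apply: (implyP (run_j k)); rewrite a_le_k /=; lia.
Qed.

Lemma run_has_pred X a j :
  j \in run X a -> j != a -> exists2 i, i \in run X a & is_succ i j.
Proof.
move=> jR j_ne_a; have [|i ij] := @exists_pred j.
  by have := run_ge jR; move: j_ne_a; rewrite -val_eqE /=; lia.
by exists i => //; apply: run_pred jR j_ne_a ij.
Qed.

Lemma run_ind X a (P : 'I_m -> Prop) :
  P a -> (forall i j, i \in run X a -> P i -> is_succ i j -> j \in X -> P j) ->
  {in run X a, forall j, P j}.
Proof.
move=> Pa Psucc j; have [n] := ubnP (j - a); elim: n j => // n IH j lt_n jR.
have [-> // | j_ne_a] := eqVneq j a.
have [i iR ij] := run_has_pred jR j_ne_a.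
apply: (Psucc i j iR _ ij (subsetP (run_sub X a) j jR)).
have := run_ge iR; move: ij => /eqP ij a_le_i; apply: IH iR; lia.
Qed.

Definition separated (R S : {set 'I_m}) :=
  {in R & S, forall x y, ~~ is_succ x y && ~~ is_succ y x}.

Lemma run_separated X a : run_start X a -> separated (run X a) (X :\: run X a).
Proof.
rewrite run_startE => /andP[aX no_pred] x y xR; rewrite inE => /andP[yNR yX].
apply/andP; split; apply/negP => succ.
  by case/negP: yNR; apply: run_succ succ yX.
have [x_eq_a | x_ne_a] := eqVneq x a.
  by case/negP: no_pred; apply/exists_inP; exists y; rewrite // -x_eq_a.
by case/negP: yNR; apply: run_pred xR x_ne_a succ.
Qed.

Definition ivl (lo hi : nat) : {set 'I_m} := [set j : 'I_m | lo <= j < hi].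

Lemma card_ivl lo hi : hi <= m -> #|ivl lo hi| = hi - lo.
Proof.
elim: hi => [|h IH] hm.
  by apply/eqP; rewrite cards_eq0; apply/eqP/setP => j; rewrite !inE ltn0 andbF.
have [h_lt_lo | lo_le_h] := ltnP h lo.
  have -> : ivl lo h.+1 = set0.
    by apply/setP => j; rewrite !inE; apply/negbTE/negP => /andP[]; lia.
  by rewrite cards0; lia.
have h_lt_m : h < m by lia.
have -> : ivl lo h.+1 = Ordinal h_lt_m |: ivl lo h.
  apply/setP => j; rewrite !inE -val_eqE /=; apply/idP/idP.
    move=> /andP[lo_le_j]; rewrite ltnS leq_eqVlt => /orP[-> // | ->].
    by rewrite lo_le_j orbT.
  by case/orP => [/eqP -> | /andP[]]; lia.
by rewrite cardsU1 IH 1?inE /= ?ltnn ?andbF; lia.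
Qed.

Lemma run_ivl X a : exists2 e, e <= m & run X a = ivl a e.
Proof.
(* e is the first index at or after a that is not in X, or m if there is none. *)
pose P n := (a <= n) && ~~ natin X n.
have Pm : P m.
  rewrite /P (ltnW (ltn_ord a)); apply/exists_inP => -[i _ /eqP i_eq_m].
  by have := ltn_ord i; rewrite i_eq_m ltnn.
case: (ex_minnP (ex_intro P m Pm)) => e /andP[a_le_e eNX] e_min.
exists e; first exact: e_min.
apply/setP => j; rewrite !inE; apply/andP/andP => -[a_le_j].
  move=> /forallP run_j; split=> //; rewrite ltnNge; apply/negP => e_le_j.
  have e_lt_m : e < m by have := ltn_ord j; lia.
  case/negP: eNX; apply/exists_inP; exists (Ordinal e_lt_m) => //.
  by apply: (implyP (run_j _)); rewrite /=; lia.
move=> j_lt_e; split=> //; apply/forallP => k; apply/implyP => /andP[a_le_k k_le_j].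
apply/negPn/negP => kNX; have := e_min k; rewrite /P a_le_k /=.
have -> : natin X k = false.
  by apply/exists_inP => -[i iX /eqP/val_inj ik]; move: kNX; rewrite -ik iX.
by move=> /(_ isT); lia.
Qed.

Definition succ_iso I I' s :=
  [/\ {in I &, injective s}, s @: I = I' &
      {in I &, forall x y, is_succ (s x) (s y) = is_succ x y}].

Lemma run_translate X Y a b :
  run_length X a = run_length Y b -> exists t, succ_iso (run X a) (run Y b) t.
Proof.
rewrite !run_lengthE; have [e e_le_m ->] := run_ivl X a.
have [f f_le_m ->] := run_ivl Y b; rewrite !card_ivl // => len_eq.
pose t x := insubd x (x - a + b).
have tE x : x \in ivl a e -> val (t x) = x - a + b.
  by rewrite inE => /andP[a_le_x x_lt_e]; rewrite val_insubd ifT //; lia.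
have ivl_ge x : x \in ivl a e -> a <= x by rewrite inE => /andP[].
exists t; split.
- move=> x y xR yR /(congr1 val); rewrite !tE // => txy.
  by apply: val_inj => /=; have := ivl_ge x xR; have := ivl_ge y yR; lia.
- apply/setP => y; rewrite inE.
  apply/imsetP/idP => [[x xR ->] | /andP[b_le_y y_lt_f]].
    by rewrite tE //; move: xR; rewrite inE; lia.
  have x_lt_m : y - b + a < m by lia.
  exists (Ordinal x_lt_m); first by rewrite inE /=; lia.
  by apply: val_inj; rewrite /= tE /= ?inE /=; lia.
- move=> x y xR yR; rewrite /is_succ !tE //.
  by move: (ivl_ge x xR) (ivl_ge y yR) => a_le_x a_le_y; apply/eqP/eqP; lia.
Qed.

Lemma exists_run_start X : X != set0 -> exists a, run_start X a.
Proof.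
case/set0Pn => x0 x0X; case: (arg_minnP (@nat_of_ord m) x0X) => a aX a_min.
exists a; rewrite run_startE; apply/andP; split=> //.
apply/exists_inP => -[b bX /eqP ba].
by have := a_min b bX; lia.
Qed.

Definition run_starts X := [set a | run_start X a].

Definition run_lengths X := [seq run_length X a | a <- enum (run_starts X)].

Lemma run_decomposition_perm I J :
  run_decomposition I = run_decomposition J <-> perm_eq (run_lengths I) (run_lengths J).
Proof.
have geq_total : total geq by move=> x y; apply: leq_total.
have geq_trans : transitive geq by move=> x y z /= yx zy; apply: leq_trans zy yx.
have geq_anti : antisymmetric geq by move=> x y; rewrite andbC => /anti_leq.
exact: (rwP (perm_sortP geq_total geq_trans geq_anti _ _)).
Qed.

Lemma run_lengths_eq_nil X : (run_lengths X == [::]) = (X == set0).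
Proof.
rewrite -size_eq0 size_map -cardE cards_eq0; apply/eqP/eqP => [no_start | ->].
  have [// | /exists_run_start[a a_start]] := eqVneq X set0.
  by move/setP/(_ a): no_start; rewrite !inE a_start.
by apply/setP => a; rewrite !inE run_startE inE.
Qed.

Lemma succ_iso_id I : succ_iso I I id.
Proof. by split=> //; rewrite imset_id. Qed.

Lemma succ_isoS I I' s J : succ_iso I I' s -> J \subset I -> succ_iso J (s @: J) s.
Proof.
move=> [s_inj _ s_succ] /subsetP JI.
by split=> // x y xJ yJ; [apply: s_inj | apply: s_succ]; apply: JI.
Qed.

Section SuccIso.
Variables (I I' : {set 'I_m}) (s : 'I_m -> 'I_m).
Hypothesis s_iso : succ_iso I I' s.

Lemma run_start_succ_iso a : a \in I -> run_start I' (s a) = run_start I a.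
Proof.
have [_ <- s_succ] := s_iso; move=> aI; rewrite !run_startE imset_f // aI /=.
congr negb; apply/exists_inP/exists_inP => [[_ /imsetP[b bI ->]] | [b bI]].
  by rewrite s_succ // => ba; exists b.
by rewrite -s_succ // => ba; exists (s b); rewrite ?imset_f.
Qed.

Lemma run_succ_iso a : a \in I -> s @: run I a = run I' (s a).
Proof.
have [s_inj s_img s_succ] := s_iso; move=> aI.
have runI := subsetP (run_sub I a).
apply/eqP; rewrite eqEsubset; apply/andP; split; apply/subsetP.
  move=> _ /imsetP[x xR ->]; move: x xR.
  apply: (@run_ind I a (fun x => s x \in run I' (s a))).
    by rewrite run_self // -s_img imset_f.
  move=> i j iR siR ij jI; apply: run_succ siR _ _; first by rewrite s_succ // runI.
  by rewrite -s_img imset_f.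
apply: run_ind => [|_ j' _ /imsetP[i iR ->] ij']; first by rewrite imset_f // run_self.
rewrite -s_img => /imsetP[j jI j'_eq]; rewrite j'_eq in ij' *.
by rewrite imset_f // (run_succ iR _ jI) // -s_succ // runI.
Qed.

Lemma run_lengths_succ_iso : perm_eq (run_lengths I') (run_lengths I).
Proof.
have [s_inj s_img _] := s_iso.
have startsE : run_starts I' = s @: run_starts I.
  apply/setP => b; rewrite inE; apply/idP/imsetP => [b_start | [a]].
    have := run_start_in b_start; rewrite -s_img => /imsetP[a aI b_eq].
    by exists a; rewrite // inE -(run_start_succ_iso aI) -b_eq.
  by rewrite inE => a_start ->; rewrite run_start_succ_iso // run_start_in.
have starts_inj : {in run_starts I &, injective s}.
  by move=> x y; rewrite !inE => /run_start_in xI /run_start_in yI; apply: s_inj.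
rewrite /run_lengths startsE.
apply: perm_trans (perm_map _ (perm_enum_imset starts_inj)) _; rewrite -map_comp.
suff -> : map (run_length I' \o s) (enum (run_starts I)) = run_lengths I.
  exact: perm_refl.
apply/eq_in_map => a; rewrite mem_enum inE => /run_start_in aI /=.
rewrite !run_lengthE -(run_succ_iso aI) card_in_imset // => x y xR yR.
by apply: s_inj; apply: (subsetP (run_sub I a)).
Qed.

End SuccIso.

Section RemoveRun.
Variables (X : {set 'I_m}) (a : 'I_m).
Hypothesis a_start : run_start X a.

Lemma run_starts_setD : run_starts X = a |: run_starts (X :\: run X a).
Proof.
have sep := run_separated a_start.
apply/setP => c; rewrite in_setU1 !inE.
have [-> | c_ne_a] := eqVneq c a; first by rewrite a_start.
rewrite /= !run_startE inE.
have [cR | cNR] := boolP (c \in run X a).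
  have [i iR ic] := run_has_pred cR c_ne_a.
  rewrite /=; apply/negbTE; rewrite negb_and negbK; apply/orP; right.
  by apply/exists_inP; exists i => //; apply: (subsetP (run_sub X a)).
case cX: (c \in X) => //=; congr negb.
apply/exists_inP/exists_inP => [[b bX bc] | [b /setDP[bX _] bc]]; last by exists b.
exists b => //; rewrite inE bX andbT; apply/negP => bR.
have cD : c \in X :\: run X a by rewrite inE cNR cX.
by have /andP[] := sep b c bR cD; rewrite bc.
Qed.

Lemma run_setD c : c \in X :\: run X a -> run (X :\: run X a) c = run X c.
Proof.
move=> cD; apply/eqP; rewrite eqEsubset runS ?subsetDl //=.
apply/subsetP; apply: run_ind => [|i j _ iR ij jX]; first exact: run_self.
have iD := subsetP (run_sub (X :\: run X a) c) i iR.
apply: (run_succ iR ij); rewrite inE jX andbT; apply/negP => jR.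
by have /andP[_] := run_separated a_start jR iD; rewrite ij.
Qed.

Lemma run_lengths_setD :
  perm_eq (run_lengths X) (run_length X a :: run_lengths (X :\: run X a)).
Proof.
have aN : a \notin run_starts (X :\: run X a).
  by rewrite inE run_startE inE run_self ?run_start_in.
rewrite /run_lengths run_starts_setD.
apply: perm_trans (perm_map _ (perm_enum_setU1 aN)) _; rewrite /= perm_cons.
suff -> : map (run_length X) (enum (run_starts (X :\: run X a))) =
          run_lengths (X :\: run X a) by exact: perm_refl.
apply/eq_in_map => c; rewrite mem_enum inE => /run_start_in cD.
by rewrite !run_lengthE run_setD.
Qed.

End RemoveRun.

Lemma succ_iso_glue I I' R R' t s :
  R \subset I -> R' \subset I' -> separated R (I :\: R) -> separated R' (I' :\: R') ->
  succ_iso R R' t -> succ_iso (I :\: R) (I' :\: R') s ->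
  succ_iso I I' (fun x => if x \in R then t x else s x).
Proof.
move=> RI R'I' sep sep' [t_inj t_img t_succ] [s_inj s_img s_succ].
have tR x : x \in R -> t x \in R' by move=> xR; rewrite -t_img imset_f.
have sD x : x \in I :\: R -> s x \in I' :\: R' by move=> xD; rewrite -s_img imset_f.
have ID x : x \in I -> x \notin R -> x \in I :\: R by move=> xI xNR; rewrite inE xNR.
split.
- move=> x y xI yI; case: ifP => xR; case: ifP => yR.
  + exact: t_inj.
  + by move=> txy; have := sD y (ID y yI (negbT yR)); rewrite -txy inE tR.
  + by move=> sxy; have := sD x (ID x xI (negbT xR)); rewrite sxy inE tR.
  + by apply: s_inj; apply: ID; rewrite ?xR ?yR.
- rewrite -{1}(setID I R) (setIidPr RI) imsetU.
  rewrite (eq_in_imset (g := t)) => [|x /= ->//].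
  rewrite (eq_in_imset (f := fun x => if x \in R then t x else s x) (g := s)) => [|x].
    by rewrite t_img s_img -{1}(setIidPr R'I') setID.
  by rewrite inE => /andP[/negbTE ->].
- move=> x y xI yI; case: ifP => xR; case: ifP => yR.
  + exact: t_succ.
  + have yD := ID y yI (negbT yR); have /andP[/negbTE -> _] := sep x y xR yD.
    by have /andP[/negbTE -> _] := sep' _ _ (tR x xR) (sD y yD).
  + have xD := ID x xI (negbT xR); have /andP[_ /negbTE ->] := sep y x yR xD.
    by have /andP[_ /negbTE ->] := sep' _ _ (tR y yR) (sD x xD).
  + by apply: s_succ; apply: ID; rewrite ?xR ?yR.
Qed.

Lemma exists_succ_iso I I' :
  perm_eq (run_lengths I) (run_lengths I') -> exists s, succ_iso I I' s.
Proof.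
have [n] := ubnP #|I|; elim: n I I' => // n IH I I' I_lt perm_II'.
have [I0 | /exists_run_start[a a_start]] := eqVneq I set0.
  have /eqP nil_I : run_lengths I == [::] by rewrite run_lengths_eq_nil I0.
  move: perm_II'; rewrite nil_I perm_sym => /perm_nilP/eqP.
  by rewrite run_lengths_eq_nil I0 => /eqP ->; exists id; apply: succ_iso_id.
have : run_length I a \in run_lengths I'.
  by rewrite -(perm_mem perm_II') map_f // mem_enum inE.
case/mapP => b; rewrite mem_enum inE => b_start len_ab.
have [t t_iso] := run_translate len_ab.
have perm_rest : perm_eq (run_lengths (I :\: run I a)) (run_lengths (I' :\: run I' b)).
  rewrite -(perm_cons (run_length I a)); apply: perm_trans (perm_trans _ perm_II') _.
    by rewrite perm_sym; apply: run_lengths_setD.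
  by rewrite len_ab; apply: run_lengths_setD.
have card_lt : #|I :\: run I a| < n.
  suff /proper_card : I :\: run I a \proper I by lia.
  apply/properP; split; first exact: subsetDl.
  have aI := run_start_in a_start.
  by exists a; rewrite // inE run_self.
have [s s_iso] := IH _ _ card_lt perm_rest.
exists (fun x => if x \in run I a then t x else s x).
exact: succ_iso_glue (run_sub I a) (run_sub I' b)
  (run_separated a_start) (run_separated b_start) t_iso s_iso.
Qed.

Lemma run_decomposition_succ_iso I I' :
  run_decomposition I = run_decomposition I' <-> exists s, succ_iso I I' s.
Proof.
rewrite run_decomposition_perm; split; first exact: exists_succ_iso.
by case=> s /run_lengths_succ_iso; rewrite perm_sym.
Qed.

End Runs.

Lemma harmonic_complement (U : finType) (m : nat) (A : 'I_m -> {set U}) :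
  harmonic A -> harmonic (complement_system A).
Proof.
move=> harmA I I' /run_decomposition_succ_iso[s s_iso].
have [s_inj s_img _] := s_iso.
apply/eqP; rewrite -(Num.Theory.eqr_nat int) /HI /complement_system !card_bigcap_setC.
rewrite -s_img big_subset_imset //; apply/eqP/eq_bigr => J JI.
have J_iso := succ_isoS s_iso JI.
rewrite card_in_imset; last by have [] := J_iso.
congr (_ * _%:R)%R; apply: harmA; apply/run_decomposition_succ_iso.
by exists s.
Qed.

Theorem corollary3p23 (U : finType) (m : nat) (A : 'I_m -> {set U}) :
  harmonic A <-> harmonic (complement_system A).
Proof.
split; first exact: harmonic_complement.
move=> /harmonic_complement harm_ccA I J eq_IJ.
have HI_ccA K : HI (complement_system (complement_system A)) K = HI A K.
  by apply: eq_bigr => i _; rewrite /complement_system setCK.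
by rewrite -!HI_ccA; apply: harm_ccA.
Qed.
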